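(* Let $m\ge 2$. Consider the operators $\underline{D}$ and $-\frac{1}{r}\,\partial_{\underline{\omega}}+(m-1)\frac{1}{r}\,\underline{\omega}$ acting (by left action) on smooth $\mathbb{R}_{0,m}$-valued functions on $\mathbb{R}^m\setminus\{0\}$. Both operators are cartesian operators, i.e. each of them can be expressed using only the cartesian partial derivatives $\partial_{x_1},\dots,\partial_{x_m}$ together with (left) multiplication and division by analytic (polynomial) functions of $\underline{x}$.
   Context: $\mathbb{R}_{0,m}$ is the real Clifford algebra generated by an orthonormal basis $e_1,\dots,e_m$ of $\mathbb{R}^m$ with $e_j^2=-1$ and $e_ie_j=-e_je_i$ for $i\ne j$. A point of $\mathbb{R}^m$ is identified with the 1-vector $\underline{x}=\sum_j e_jx_j$, so $\underline{x}^2=-|\underline{x}|^2$; $r=|\underline{x}|$ and $\underline{\omega}=\underline{x}/r\in S^{m-1}$. Division by $\underline{x}$ means left multiplication by $\frac{1}{\underline{x}}=-\underline{x}/|\underline{x}|^2$. The Dirac operator is $\underline{\partial}=\sum_j e_j\partial_{x_j}$; in spherical coordinates $\underline{\partial}=\underline{\omega}\,\partial_r+\frac{1}{r}\partial_{\underline{\omega}}$, which defines the angular Dirac operator $\partial_{\underline{\omega}}:=r(\underline{\partial}-\underline{\omega}\,\partial_r)$. The signum-Dirac operator is $\underline{D}f:=\underline{\omega}\,\underline{\partial}(-\underline{\omega}\,f)$. The Euler operator is $\mathbb{E}=\sum_j x_j\partial_{x_j}$ and the angular momentum operator is $\Gamma=-\sum_{j<k}e_je_k(x_j\partial_{x_k}-x_k\partial_{x_j})$.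 An operator is called cartesian if it involves only partial derivatives with respect to the cartesian coordinates and multiplication and division by analytic functions. *)

From HB Require Import structures.
From mathcomp Require Import all_boot all_order all_algebra.
From mathcomp Require Import all_classical all_reals all_analysis.
Set Implicit Arguments. Unset Strict Implicit. Unset Printing Implicit Defensive.
Import Order.TTheory GRing.Theory Num.Theory.
Import numFieldNormedType.Exports.
Local Open Scope ring_scope.

Section Clifford.
Variables (R : realType) (m : nat).

(* The real Clifford algebra R_{0,m}: an element is the family of its
   coordinates on the basis blades e_A = e_{a1}...e_{ak}, a1 < ... < ak,
   A a subset of {0,...,m-1}. *)
Definition Cl := {ffun {set 'I_m} -> R}.

(* sign of e_A e_B = sgn A B * e_{A Δ B}, with e_j^2 = -1 *)
Definition clsgn (A B : {set 'I_m}) : R :=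
  (-1) ^+ (#|[set p : 'I_m * 'I_m | (p.1 \in A) && (p.2 \in B) && (p.2 < p.1)%N]|
           + #|A :&: B|).

Definition clmul (a b : Cl) : Cl :=
  [ffun C => \sum_(A : {set 'I_m}) \sum_(B : {set 'I_m} | (A :\: B) :|: (B :\: A) == C)
              clsgn A B * a A * b B].

Definition clscal (s : R) : Cl := [ffun A => if A == finset.set0 then s else 0].
Definition clvec1 (j : 'I_m) : Cl := [ffun A => if A == [set j] then 1 else 0].

Notation pt := 'rV[R]_m.

Definition vecx (x : pt) : Cl := \sum_(j < m) x 0 j *: clvec1 j.
Definition rad (x : pt) : R := Num.sqrt (\sum_(j < m) x 0 j ^+ 2).
Definition omegapt (x : pt) : pt := (rad x)^-1 *: x.
Definition omega (x : pt) : Cl := (rad x)^-1 *: vecx x.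

Definition ept (j : 'I_m) : pt := \row_(k < m) (if k == j then 1 else 0).

(* Clifford-valued functions (on R^m; only values on R^m \ {0} matter) *)
Definition CF := pt -> Cl.
Definition Op := CF -> CF.

Definition pdC (j : 'I_m) (F : CF) : CF :=
  fun x => [ffun A => derive (fun y => F y A) x (ept j)].

Definition pdr (F : CF) : CF :=
  fun x => [ffun A => derive (fun y => F y A) x (omegapt x)].

Definition dirac (F : CF) : CF := fun x => \sum_(j < m) clmul (clvec1 j) (pdC j F x).

Definition angdirac (F : CF) : CF :=
  fun x => rad x *: (dirac F x - clmul (omega x) (pdr F x)).

Definition sdirac (F : CF) : CF :=
  fun x => clmul (omega x) (dirac (fun y => - clmul (omega y) (F y)) x).

Definition opB (F : CF) : CF :=
  fun x => - ((rad x)^-1 *: angdirac F x)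
           + ((m.-1)%:R / rad x) *: clmul (omega x) (F x).

Definition iterpd (s : seq 'I_m) (F : CF) : CF := foldr pdC F s.
Definition smooth (F : CF) : Prop :=
  forall (s : seq 'I_m) (A : {set 'I_m}) (x : pt), x != 0 ->
    differentiable (fun y => iterpd s F y A) x.

Inductive polyfun : CF -> Prop :=
  | pf_const (c : Cl) : polyfun (fun _ => c)
  | pf_coord (j : 'I_m) : polyfun (fun x => clscal (x 0 j))
  | pf_add (g h : CF) : polyfun g -> polyfun h -> polyfun (fun x => g x + h x)
  | pf_mul (g h : CF) : polyfun g -> polyfun h -> polyfun (fun x => clmul (g x) (h x)).

(* cartesian operators: generated by the cartesian partial derivatives,
   left multiplication and left division by polynomial functions of x
   (division by g = left multiplication by the pointwise inverse of g, where
   g(x) is invertible for x <> 0), sums and compositions. *)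
Inductive cartesian : Op -> Prop :=
  | cart_id : cartesian (fun F => F)
  | cart_pd (j : 'I_m) : cartesian (pdC j)
  | cart_mul (g : CF) : polyfun g -> cartesian (fun F x => clmul (g x) (F x))
  | cart_div (g h : CF) : polyfun g ->
      (forall x : pt, x != 0 ->
         clmul (g x) (h x) = clscal 1 /\ clmul (h x) (g x) = clscal 1) ->
      cartesian (fun F x => clmul (h x) (F x))
  | cart_add (P Q : Op) : cartesian P -> cartesian Q -> cartesian (fun F x => P F x + Q F x)
  | cart_comp (P Q : Op) : cartesian P -> cartesian Q -> cartesian (fun F => P (Q F)).

Definition is_cartesian (P : Op) : Prop :=
  exists Q : Op, cartesian Q /\
    forall F : CF, smooth F -> forall x : pt, x != 0 -> P F x = Q F x.

End Clifford.

(* Away from the origin, omega = x / r, and the Leibniz rule with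
   d_j (1/r) = - x_j / r^3 turns D f = omega dirac (- omega f) into
     D f = |x|^-2 (x dirac (- x f) - |x|^-2 x x (- x f)).
   Likewise d_r = (1/r) E, E the Euler operator, so -(1/r) d_omega = - dirac + omega d_r and
     -(1/r) d_omega + (m-1) (1/r) omega = - dirac + |x|^-2 (x E + (m-1) x).
   Only even powers of r survive, so both right-hand sides use only the d_j,
   left multiplication by the polynomial x and division by the polynomial
   |x|^2, which does not vanish on R^m \ {0}. *)

From Pilot Require Import Defs.
From mathcomp Require Import all_boot all_order all_algebra.
From mathcomp Require Import all_classical all_reals all_analysis.
From mathcomp Require Import ring.
Set Implicit Arguments. Unset Strict Implicit. Unset Printing Implicit Defensive.
Import Order.TTheory GRing.Theory Num.Theory.
Import numFieldNormedType.Exports.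
Local Open Scope ring_scope.

Section CliffordProduct.
Variables (R : realType) (m : nat).
Local Notation Cl := (Cl R m).

Lemma clmul_linearl (k : R) (a a' b : Cl) :
  clmul (k *: a + a') b = k *: clmul a b + clmul a' b.
Proof.
apply/ffunP => C; rewrite !ffunE scaler_sumr -big_split /=.
apply: eq_bigr => A _; rewrite scaler_sumr -big_split /=.
by apply: eq_bigr => B _; rewrite !ffunE /= /GRing.scale /=; ring.
Qed.

Lemma clmul_linearr (k : R) (a b b' : Cl) :
  clmul a (k *: b + b') = k *: clmul a b + clmul a b'.
Proof.
apply/ffunP => C; rewrite !ffunE scaler_sumr -big_split /=.
apply: eq_bigr => A _; rewrite scaler_sumr -big_split /=.
by apply: eq_bigr => B _; rewrite !ffunE /= /GRing.scale /=; ring.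
Qed.

Lemma clmul0l (b : Cl) : clmul 0 b = 0.
Proof.
by apply/ffunP => C; rewrite !ffunE big1 // => A _; rewrite big1 // => B _; rewrite ffunE; ring.
Qed.

Lemma clmul0r (a : Cl) : clmul a 0 = 0.
Proof.
by apply/ffunP => C; rewrite !ffunE big1 // => A _; rewrite big1 // => B _; rewrite ffunE; ring.
Qed.

Lemma clmulZl (k : R) (a b : Cl) : clmul (k *: a) b = k *: clmul a b.
Proof. by rewrite -[k *: a]addr0 clmul_linearl clmul0l addr0. Qed.

Lemma clmulZr (k : R) (a b : Cl) : clmul a (k *: b) = k *: clmul a b.
Proof. by rewrite -[k *: b]addr0 clmul_linearr clmul0r addr0. Qed.

Lemma clmulDl (a a' b : Cl) : clmul (a + a') b = clmul a b + clmul a' b.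
Proof. by rewrite -[a]scale1r clmul_linearl !scale1r. Qed.

Lemma clmulDr (a b b' : Cl) : clmul a (b + b') = clmul a b + clmul a b'.
Proof. by rewrite -[b]scale1r clmul_linearr !scale1r. Qed.

Lemma clmulNr (a b : Cl) : clmul a (- b) = - clmul a b.
Proof. by rewrite -scaleN1r clmulZr scaleN1r. Qed.

Lemma clmul_suml (I : Type) (s : seq I) (f : I -> Cl) (b : Cl) :
  clmul (\sum_(i <- s) f i) b = \sum_(i <- s) clmul (f i) b.
Proof.
elim: s => [|i s IH]; first by rewrite !big_nil clmul0l.
by rewrite !big_cons clmulDl IH.
Qed.

Lemma clsgn0l (B : {set 'I_m}) : clsgn R finset.set0 B = 1.
Proof.
rewrite /clsgn finset.set0I cards0 addn0.
rewrite (_ : [set p : 'I_m * 'I_m | _] = finset.set0) ?cards0 ?expr0 //.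
by apply/setP => p; rewrite !inE.
Qed.

Lemma clmul_scall (c : R) (b : Cl) : clmul (clscal m c) b = c *: b.
Proof.
apply/ffunP => C; rewrite !ffunE (bigD1 finset.set0) //=.
rewrite [X in _ + X]big1 ?addr0; last first.
  by move=> A /negbTE A0; rewrite big1 // => B _; rewrite ffunE A0; ring.
rewrite (big_pred1 C); last by move=> B /=; rewrite finset.setD0 finset.set0D finset.set0U.
by rewrite ffunE eqxx clsgn0l mul1r.
Qed.

Lemma clscalD (a b : R) : clscal m (a + b) = clscal m a + clscal m b.
Proof. by apply/ffunP => C; rewrite !ffunE; case: ifP => _; rewrite ?addr0. Qed.

Lemma clscal_sum (I : Type) (s : seq I) (f : I -> R) :
  clscal m (\sum_(i <- s) f i) = \sum_(i <- s) clscal m (f i).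
Proof.
elim: s => [|i s IH]; last by rewrite !big_cons clscalD IH.
by rewrite !big_nil; apply/ffunP => C; rewrite !ffunE; case: ifP.
Qed.

Lemma clscalM (a b : R) : clmul (clscal m a) (clscal m b) = clscal m (a * b).
Proof.
rewrite clmul_scall; apply/ffunP => C; rewrite !ffunE.
by case: ifP => _; rewrite ?scaler0.
Qed.

End CliffordProduct.

Section Radius.
Variables (R : realType) (m : nat).
Local Notation pt := 'rV[R]_m.
(* [rad] and [dirac] alone would denote sesquilinear.rad and the Dirac measure. *)
Local Notation rad := (@Defs.rad R m).

Definition rad2 (x : pt) : R := \sum_(j < m) x 0 j ^+ 2.

Lemma rad2_ge0 (x : pt) : 0 <= rad2 x.
Proof. by apply: sumr_ge0 => j _; exact: sqr_ge0. Qed.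

Lemma rad2_neq0 (x : pt) : x != 0 -> rad2 x != 0.
Proof.
apply: contra => /eqP /psumr_eq0P x0; apply/eqP/matrixP => i j.
rewrite (ord1 i) mxE; apply/eqP; rewrite -sqrf_eq0; apply/eqP/x0 => // k _.
exact: sqr_ge0.
Qed.

Lemma sqr_rad (x : pt) : rad x ^+ 2 = rad2 x.
Proof. by rewrite sqr_sqrtr // rad2_ge0. Qed.

Lemma rad_neq0 (x : pt) : x != 0 -> rad x != 0.
Proof. by move=> /rad2_neq0; apply: contra => /eqP r0; rewrite -sqr_rad r0 expr0n. Qed.

End Radius.

Section CartesianOperators.
Variables (R : realType) (m : nat).
Local Notation Cl := (Cl R m).
Local Notation pt := 'rV[R]_m.
Local Notation CF := (CF R m).
Local Notation Op := (Op R m).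
Local Notation dirac := (@Defs.dirac R m).

Definition euler (F : CF) : CF := fun x => \sum_(j < m) x 0 j *: pdC j F x.

Lemma polyfun_eq (g h : CF) : polyfun g -> (forall x, g x = h x) -> polyfun h.
Proof. by move=> pg gh; rewrite -(funext gh). Qed.

Lemma cartesian_eq (P Q : Op) :
  cartesian P -> (forall F x, P F x = Q F x) -> cartesian Q.
Proof. by move=> cP PQ; suff <- : P = Q by []; apply/funext => F; exact/funext. Qed.

Lemma polyfun_sum (I : Type) (s : seq I) (f : I -> CF) :
  (forall i, polyfun (f i)) -> polyfun (fun x => \sum_(i <- s) f i x).
Proof.
move=> pf; elim: s => [|i s IH].
  by apply: (polyfun_eq (pf_const 0)) => x; rewrite big_nil.
by apply: (polyfun_eq (pf_add (pf i) IH)) => x; rewrite big_cons.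
Qed.

Lemma cartesian_sum (I : Type) (s : seq I) (P : I -> Op) :
  (forall i, cartesian (P i)) -> cartesian (fun F x => \sum_(i <- s) P i F x).
Proof.
move=> cP; elim: s => [|i s IH].
  by apply: (cartesian_eq (cart_mul (pf_const 0))) => F x; rewrite big_nil clmul0l.
by apply: (cartesian_eq (cart_add (cP i) IH)) => F x; rewrite big_cons.
Qed.

Lemma polyfun_rad2 : polyfun (fun x : pt => clscal m (rad2 x) : Cl).
Proof.
rewrite (_ : (fun x : pt => _)
  = fun x : pt => \sum_(j < m) clmul (clscal m (x 0 j)) (clscal m (x 0 j))).
  by apply: polyfun_sum => j; exact: pf_mul (pf_coord R j) (pf_coord R j).
by apply/funext => x; rewrite clscal_sum; apply: eq_bigr => j _; rewrite clscalM expr2.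
Qed.

Lemma polyfun_vecx : polyfun (@vecx R m).
Proof.
rewrite (_ : @vecx R m
  = fun x : pt => \sum_(j < m) clmul (clscal m (x 0 j)) (clvec1 R j)).
  by apply: polyfun_sum => j; exact: pf_mul (pf_coord R j) (pf_const _).
by apply/funext => x; apply: eq_bigr => j _; rewrite clmul_scall.
Qed.

Variable P : Op.
Hypothesis cP : cartesian P.

Lemma cartesian_mull (g : CF) :
  polyfun g -> cartesian (fun F x => clmul (g x) (P F x)).
Proof. by move=> pg; exact: cart_comp (cart_mul pg) cP. Qed.

Lemma cartesian_vecx : cartesian (fun F x => clmul (vecx x) (P F x)).
Proof. exact: cartesian_mull polyfun_vecx. Qed.

Lemma cartesian_scale (p : pt -> R) :
  polyfun (fun x => clscal m (p x)) -> cartesian (fun F x => p x *: P F x).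
Proof.
move=> pp; apply: (cartesian_eq (cartesian_mull pp)) => F x.
exact: clmul_scall.
Qed.

Lemma cartesian_opp : cartesian (fun F x => - P F x).
Proof.
apply: (cartesian_eq (@cartesian_scale (fun=> -1) (pf_const _))) => F x.
exact: scaleN1r.
Qed.

Lemma cartesian_scaleV (p : pt -> R) :
  polyfun (fun x => clscal m (p x)) -> (forall x, x != 0 -> p x != 0) ->
  cartesian (fun F x => (p x)^-1 *: P F x).
Proof.
move=> pp p_neq0.
have pV x : x != 0 -> clmul (clscal m (p x)) (clscal m (p x)^-1) = clscal m 1 /\
                      clmul (clscal m (p x)^-1) (clscal m (p x)) = clscal m 1.
  by move=> /p_neq0 px0; rewrite !clscalM mulfV // mulVf.
apply: (cartesian_eq (cart_comp (cart_div pp pV) cP)) => F x.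
exact: clmul_scall.
Qed.

Lemma cartesian_rad2V : cartesian (fun F x => (rad2 x)^-1 *: P F x).
Proof. exact: cartesian_scaleV polyfun_rad2 (@rad2_neq0 R m). Qed.

Lemma cartesian_dirac : cartesian (fun F => dirac (P F)).
Proof.
have cj j : cartesian (fun F x => clmul (clvec1 R j) (pdC j (P F) x)).
  exact: cart_comp (cart_mul (pf_const _)) (cart_comp (cart_pd R j) cP).
exact: cartesian_sum.
Qed.

Lemma cartesian_euler : cartesian (fun F => euler (P F)).
Proof.
have cj j : cartesian (fun F x => x 0 j *: pdC j (P F) x).
  apply: (cartesian_eq (cart_comp (cart_mul (pf_coord R j)) (cart_comp (cart_pd R j) cP))).
  by move=> F x; exact: clmul_scall.
exact: cartesian_sum.
Qed.

End CartesianOperators.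

Section Derivatives.
Variables (R : realType) (m : nat).
Local Notation pt := 'rV[R]_m.
Local Notation CF := (CF R m).
Local Notation rad := (@Defs.rad R m).

Lemma derive_coord (k : 'I_m) (x v : pt) : 'D_v (fun y : pt => y 0 k) x = v 0 k.
Proof. by rewrite -[in RHS](derive_id x v) derive_mx // mxE. Qed.

Lemma differentiable_big (I : finType) (P : pred I) (f : I -> pt -> R) (x : pt) :
  (forall i, differentiable (f i) x) ->
  differentiable (fun y => \sum_(i | P i) f i y) x.
Proof.
move=> df; rewrite -fct_sumE.
by elim/big_ind: _ => // g h dg dh; exact: differentiableD.
Qed.

Lemma differentiable_coord_sqr (k : 'I_m) (x : pt) :
  differentiable (fun y : pt => y 0 k ^+ 2) x.
Proof. by have := differentiableX 1 (differentiable_coord x 0 k); rewrite exprfctE. Qed.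

Lemma differentiable_rad2 (x : pt) : differentiable (@rad2 R m) x.
Proof. by apply: differentiable_big => k; exact: differentiable_coord_sqr. Qed.

Lemma derive_rad2 (x : pt) (j : 'I_m) : 'D_(ept R j) (@rad2 R m) x = 2 * x 0 j.
Proof.
have dk k : 'D_(ept R j) (fun y : pt => y 0 k ^+ 2) x = 2 * x 0 k * ept R j 0 k.
  rewrite -[fun y => _](exprfctE (fun y : pt => y 0 k)) deriveX; last first.
    exact/diff_derivable/differentiable_coord.
  by rewrite derive_coord /GRing.scale /= expr1.
rewrite /rad2 -fct_sumE derive_sum; last first.
  by move=> k; exact/diff_derivable/differentiable_coord_sqr.
rewrite (bigD1 j) //= big1 ?addr0; first by rewrite dk mxE eqxx mulr1.
by move=> k kj; rewrite dk mxE (negbTE kj) mulr0.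
Qed.

Lemma differentiable_rad (x : pt) : x != 0 -> differentiable rad x.
Proof.
move=> x0; rewrite (_ : rad = Num.sqrt \o @rad2 R m) //.
apply: differentiable_comp; first exact: differentiable_rad2.
have rad2_gt0 : 0 < rad2 x by rewrite lt_def rad2_neq0 // rad2_ge0.
by apply/derivable1_diffP; have [] := is_derive1_sqrt rad2_gt0.
Qed.

Lemma derive_rad (x : pt) (j : 'I_m) : x != 0 ->
  'D_(ept R j) rad x = x 0 j / rad x.
Proof.
move=> x0; have r0 := rad_neq0 x0.
have := deriveX 2 (@diff_derivable _ _ _ _ _ (ept R j) (differentiable_rad x0)).
rewrite (_ : rad ^+ 2 = @rad2 R m); last by apply/funext => y; rewrite exprfctE sqr_rad.
rewrite derive_rad2 /GRing.scale /= expr1 => Dr.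
apply: (@mulfI _ (2 * rad x)); first by rewrite mulf_neq0 // pnatr_eq0.
by rewrite -Dr; field.
Qed.

Lemma derive_radV (x : pt) (j : 'I_m) : x != 0 ->
  'D_(ept R j) (fun y => (rad y)^-1) x = - (x 0 j / rad x ^+ 3).
Proof.
move=> x0; have r0 := rad_neq0 x0.
rewrite deriveV //; last exact/diff_derivable/differentiable_rad.
by rewrite derive_rad // /GRing.scale /=; field.
Qed.

Lemma pt_decomp (x : pt) : x = \sum_(j < m) x 0 j *: ept R j.
Proof.
apply/matrixP => i k; rewrite summxE (ord1 i) (bigD1 k) //= big1 ?addr0.
  by rewrite !mxE eqxx mulr1.
by move=> j jk; rewrite !mxE eq_sym (negbTE jk) mulr0.
Qed.

Lemma derive_decomp (f : pt -> R) (x v : pt) : differentiable f x ->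
  'D_v f x = \sum_(j < m) v 0 j * 'D_(ept R j) f x.
Proof.
move=> df; rewrite deriveE // {1}(pt_decomp v) linear_sum /=.
by apply: eq_bigr => j _; rewrite linearZ deriveE.
Qed.

Lemma differentiable_vecx (A : {set 'I_m}) (x : pt) :
  differentiable (fun y => vecx y A) x.
Proof.
rewrite (_ : (fun y : pt => _) = fun y : pt => \sum_(j < m) y 0 j * clvec1 R j A).
  apply: differentiable_big => j.
  exact: differentiableM (differentiable_coord _ _ _) (differentiable_cst _ _).
by apply/funext => y; rewrite sum_ffunE; apply: eq_bigr => j _; rewrite ffunE.
Qed.

Lemma differentiable_clmul (a b : CF) (x : pt) :
  (forall A, differentiable (fun y => a y A) x) ->
  (forall B, differentiable (fun y => b y B) x) ->
  forall C, differentiable (fun y => clmul (a y) (b y) C) x.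
Proof.
move=> da db C; under eq_fun do rewrite ffunE.
apply: differentiable_big => A; apply: differentiable_big => B.
exact: differentiableM (differentiableM (differentiable_cst _ _) (da A)) (db B).
Qed.

Lemma pdC_scale (f : pt -> R) (G : CF) (x : pt) (j : 'I_m) :
  derivable f x (ept R j) -> (forall A, derivable (fun y => G y A) x (ept R j)) ->
  pdC j (fun y => f y *: G y) x = 'D_(ept R j) f x *: G x + f x *: pdC j G x.
Proof.
move=> df dG; apply/ffunP => A; rewrite !ffunE.
rewrite (_ : (fun y => _) = f * (fun y => G y A)); last by apply/funext => y; rewrite ffunE.
by rewrite deriveM // addrC /GRing.scale /= mulrC.
Qed.

End Derivatives.

Section CartesianForms.
Variables (R : realType) (m : nat).
Local Notation pt := 'rV[R]_m.
Local Notation CF := (CF R m).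
Local Notation rad := (@Defs.rad R m).
Local Notation dirac := (@Defs.dirac R m).

Definition sdirac_cart (F : CF) : CF := fun x =>
  (rad2 x)^-1 *: (clmul (vecx x) (dirac (fun y => - clmul (vecx y) (F y)) x)
    - (rad2 x)^-1 *: clmul (vecx x) (clmul (vecx x) (- clmul (vecx x) (F x)))).

Definition opB_cart (F : CF) : CF := fun x =>
  - dirac F x
  + (rad2 x)^-1 *: (clmul (vecx x) (euler F x) + (m.-1)%:R *: clmul (vecx x) (F x)).

Lemma cartesian_sdirac_cart : cartesian sdirac_cart.
Proof.
apply: cartesian_rad2V; apply: cart_add.
  apply: cartesian_vecx; apply: cartesian_dirac; apply: cartesian_opp.
  by apply: cartesian_vecx; exact: cart_id.
apply: cartesian_opp; apply: cartesian_rad2V; do 2 apply: cartesian_vecx.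
by apply: cartesian_opp; apply: cartesian_vecx; exact: cart_id.
Qed.

Lemma cartesian_opB_cart : cartesian opB_cart.
Proof.
apply: cart_add; first by apply: cartesian_opp; apply: cartesian_dirac; exact: cart_id.
apply: cartesian_rad2V; apply: cart_add.
  by apply: cartesian_vecx; apply: cartesian_euler; exact: cart_id.
by apply: cartesian_scale; [apply: cartesian_vecx; exact: cart_id | exact: pf_const].
Qed.

Lemma dirac_scale_radV (G : CF) (x : pt) : x != 0 ->
  (forall A, differentiable (fun y => G y A) x) ->
  dirac (fun y => (rad y)^-1 *: G y) x
  = (rad x)^-1 *: dirac G x - (rad x ^+ 3)^-1 *: clmul (vecx x) (G x).
Proof.
move=> x0 dG; have r0 := rad_neq0 x0.
have pdCj j : pdC j (fun y => (rad y)^-1 *: G y) x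
    = - (x 0 j / rad x ^+ 3) *: G x + (rad x)^-1 *: pdC j G x.
  rewrite pdC_scale ?derive_radV // => [|A]; last exact: diff_derivable.
  exact/derivableV/diff_derivable/differentiable_rad.
rewrite /Defs.dirac; under eq_bigr do rewrite pdCj clmulDr !clmulZr.
rewrite big_split /= -scaler_sumr addrC; congr (_ + _).
rewrite /vecx clmul_suml scaler_sumr -sumrN; apply: eq_bigr => j _.
by rewrite clmulZl scalerA scaleNr mulrC.
Qed.

Lemma sdiracE (F : CF) : smooth F -> forall x, x != 0 -> sdirac F x = sdirac_cart F x.
Proof.
move=> sF x x0; have r0 := rad_neq0 x0.
set G := fun y => - clmul (vecx y) (F y).
have dG A : differentiable (fun y => G y A) x.
  rewrite (_ : (fun y => _) = - (fun y => clmul (vecx y) (F y) A)); last first.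
    by apply/funext => y; rewrite /G ffunE.
  apply/differentiableN/differentiable_clmul => B; first exact: differentiable_vecx.
  exact: sF [::] B x x0.
rewrite /sdirac (_ : (fun y => _) = fun y => (rad y)^-1 *: G y); last first.
  by apply/funext => y; rewrite /omega clmulZl scalerN.
rewrite dirac_scale_radV // /omega clmulZl clmulDr clmulNr !clmulZr /sdirac_cart -sqr_rad.
by rewrite !scalerBr !scalerA; congr (_ *: _ - _ *: _); field.
Qed.

Lemma pdr_euler (F : CF) (x : pt) : (forall A, differentiable (fun y => F y A) x) ->
  pdr F x = (rad x)^-1 *: euler F x.
Proof.
move=> dF; apply/ffunP => A; rewrite !ffunE (derive_decomp _ (dF A)) sum_ffunE.
rewrite [in RHS]/GRing.scale /= mulr_sumr.
by apply: eq_bigr => j _; rewrite !ffunE !mxE /GRing.scale /= mulrA.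
Qed.

Lemma opBE (F : CF) : smooth F -> forall x, x != 0 -> opB F x = opB_cart F x.
Proof.
move=> sF x x0; have r0 := rad_neq0 x0.
rewrite /opB /angdirac pdr_euler => [|A]; last exact: sF [::] A x x0.
rewrite /omega !clmulZl !clmulZr /opB_cart -sqr_rad !scalerA scalerBr !scalerA.
rewrite mulVf // scale1r opprB scalerDr !scalerA [_ - _]addrC -addrA.
by congr (_ + (_ *: _ + _ *: _)); field.
Qed.

End CartesianForms.

Theorem proposition3 (R : realType) (m : nat) (hm : (2 <= m)%N) :
  is_cartesian (@sdirac R m) /\ is_cartesian (@opB R m).
Proof.
split.
  exists (@sdirac_cart R m); split; [exact: cartesian_sdirac_cart | exact: sdiracE].
exists (@opB_cart R m); split; [exact: cartesian_opB_cart | exact: opBE].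
Qed.
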